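(* Let $G$ be a finite connected regular line graph without isolated vertices, of valency $k>3$. If $V(G)$ can be partitioned into vertex sets of pairwise disjoint cliques of $G$, each of maximum size $\omega(G)$, then $G$ is symmetric with respect to graph entropy, i.e., the uniform distribution on $V(G)$ maximizes $H(G,P)$ over all probability distributions $P$ on $V(G)$.
   Context: A line graph is a graph of the form $L(H)$ for some graph $H$, whose vertices are the edges of $H$, two being adjacent when they share an endpoint. For a finite graph $G$ with $V(G)=\{1,\dots,n\}$, the vertex packing polytope $VP(G)\subseteq\mathbb{R}^n$ is the convex hull of the characteristic vectors of the independent sets of $G$. For a probability distribution $P=(p_1,\dots,p_n)$ on $V(G)$, the graph entropy is $H(G,P)=\min_{\mathbf a\in VP(G)}\sum_{i=1}^n p_i\log(1/a_i)$. *)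

From HB Require Import structures.
From mathcomp Require Import all_boot all_order all_algebra.
From mathcomp Require Import all_classical all_reals all_analysis.
Set Implicit Arguments. Unset Strict Implicit. Unset Printing Implicit Defensive.
Import Order.TTheory GRing.Theory Num.Theory.
Local Open Scope ring_scope.

Definition simple_graph (V : finType) (e : rel V) : Prop :=
  symmetric e /\ irreflexive e.

Definition connected_graph (V : finType) (e : rel V) : Prop :=
  forall u v : V, connect e u v.

Definition nbhd (V : finType) (e : rel V) (v : V) : {set V} := [set w | e v w].

Definition regular_of (V : finType) (e : rel V) (k : nat) : Prop :=
  forall v : V, #|nbhd e v| = k.

Definition no_isolated (V : finType) (e : rel V) : Prop :=
  forall v : V, exists w : V, e v w.

Definition is_line_graph (V : finType) (e : rel V) : Prop :=
  exists (T : finType) (eH : rel T), simple_graph eH /\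
  exists f : V -> {set T},
    [/\ injective f,
        (forall v, exists x y, eH x y /\ f v = [set x; y]),
        (forall x y, eH x y -> exists v, f v = [set x; y]) &
        (forall u v, u != v -> (e u v <-> f u :&: f v != finset.set0))].

Definition is_clique (V : finType) (e : rel V) (C : {set V}) : bool :=
  [forall x in C, forall y in C, (x != y) ==> e x y].

Definition is_independent (V : finType) (e : rel V) (S : {set V}) : bool :=
  [forall x in S, forall y in S, ~~ e x y].

Definition clique_number (V : finType) (e : rel V) : nat :=
  \max_(C : {set V} | is_clique e C) #|C|.

Definition max_clique_partitionable (V : finType) (e : rel V) : Prop :=
  exists Q : {set {set V}}, finset.partition Q [set: V] /\
    forall C, C \in Q -> is_clique e C /\ #|C| = clique_number e.

Local Open Scope classical_set_scope.

Definition charvec (R : realType) (V : finType) (S : {set V}) : V -> R :=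
  fun i => if i \in S then 1 else 0.

Definition VP (R : realType) (V : finType) (e : rel V) : set (V -> R) :=
  [set a | exists lam : {set V} -> R,
     [/\ (forall S, 0 <= lam S),
         (forall S, ~~ is_independent e S -> lam S = 0),
         \sum_(S : {set V}) lam S = 1 &
         forall i, a i = \sum_(S : {set V}) lam S * @charvec R V S i]].

Definition is_distribution (R : realType) (V : finType) (P : V -> R) : Prop :=
  (forall i, 0 <= P i) /\ \sum_(i : V) P i = 1.

Definition uniform_distribution (R : realType) (V : finType) : V -> R :=
  fun _ => (#|V|%:R)^-1.

(* graph entropy H(G,P) = min_{a in VP(G)} sum_i p_i log(1/a_i), with the
   conventions 0 * log(1/a) = 0 and p * log(1/0) = +oo for p > 0.  The minimum
   is attained at a point where the objective is finite, so it equals the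
   infimum of the finite values, i.e. over those a in VP(G) with a_i > 0
   whenever p_i > 0. *)
Definition graph_entropy (R : realType) (V : finType) (e : rel V) (P : V -> R) : R :=
  inf [set h : R | exists a, VP e a /\ (forall i, 0 < P i -> 0 < a i) /\
         h = \sum_(i : V | 0 < P i) P i * ln (a i)^-1].

Definition entropy_symmetric (R : realType) (V : finType) (e : rel V) : Prop :=
  forall P : V -> R, is_distribution P ->
    graph_entropy e P <= graph_entropy e (@uniform_distribution R V).

From HB Require Import structures.
From mathcomp Require Import all_boot all_order all_algebra.
From mathcomp Require Import all_classical all_reals all_analysis.
From mathcomp Require Import zify.
Set Implicit Arguments. Unset Strict Implicit. Unset Printing Implicit Defensive.

(* For every distribution P, the constant vector 1/chi(G) lies in VP(G) (it is the
   average of the colour classes of an optimal colouring), so H(G,P) <= ln chi(G).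
   For the uniform distribution and any a in VP(G), the coordinates of a sum to at
   most 1 on every clique; summing ln(w a_i) <= w a_i - 1 over a partition of V(G)
   into w-cliques, w = omega(G), gives H(G,U) >= ln w.  Hence it suffices that
   chi(G) = omega(G).
   For G = L(H) with k > 3, a block of the partition is either a star of H or, only
   when w = 3, a triangle of H.  Colouring the vertices of star blocks is an edge
   colouring of a bipartite multigraph of maximum degree w (blocks against far
   ends), which Konig's theorem provides via Kempe chains.  A vertex of a triangle
   block then has at most two coloured neighbours, and the three vertices hanging
   off the triangle's corners force its own vertices to receive distinct colours. *)

Lemma avoided_colour (T : finType) (w : nat) (c : T -> 'I_w) (N : {set T}) :
  (#|N| < w)%N -> exists i, forall x, x \in N -> c x != i.
Proof.
move=> small; have : ~~ ([set: 'I_w] \subset c @: N).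
  apply/negP => /subset_leq_card; rewrite cardsT card_ord leqNgt.
  by rewrite (leq_ltn_trans (leq_imset_card _ _) small).
case/subsetPn => i _ hi; exists i => x xN.
by apply: contraNneq hi => <-; apply: imset_f.
Qed.

Section KonigEdgeColouring.
Variables (E A B : finType) (p : E -> A) (q : E -> B) (w : nat).

Definition linked (x y : E) : Prop := p x = p y \/ q x = q y.

Definition proper_on (D : {set E}) (c : E -> 'I_w) : Prop :=
  forall x y, x \in D -> y \in D -> x != y -> linked x y -> c x != c y.

Lemma proper_on_linked_eq (D : {set E}) (c : E -> 'I_w) x y :
  proper_on D c -> x \in D -> y \in D -> linked x y -> c x = c y -> x = y.
Proof.
move=> Pc xD yD lxy cxy; apply/eqP; apply/negPn/negP => nxy.
by move: (Pc x y xD yD nxy lxy); rewrite cxy eqxx.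
Qed.

Lemma proper_on_setU1 (D : {set E}) (c : E -> 'I_w) x0 i : x0 \notin D -> proper_on D c ->
  (forall x, x \in D -> p x = p x0 -> c x != i) ->
  (forall x, x \in D -> q x = q x0 -> c x != i) ->
  proper_on (x0 |: D) (fun x => if x == x0 then i else c x).
Proof.
move=> x0D Pc free_p free_q x y.
have neq_x0 z : z \in D -> z != x0 by move=> zD; apply: contraNneq x0D => <-.
rewrite !finset.in_setU1 => /orP[/eqP->|xD] /orP[/eqP->|yD] nxy.
- by rewrite eqxx in nxy.
- rewrite eqxx (negbTE (neq_x0 y yD)) eq_sym => -[] h; [exact: free_p | exact: free_q].
- rewrite eqxx (negbTE (neq_x0 x xD)) => -[] h; [exact: free_p | exact: free_q].
- by rewrite (negbTE (neq_x0 x xD)) (negbTE (neq_x0 y yD)); apply: Pc.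
Qed.

Lemma missing_colour (c : E -> 'I_w) (D X : {set E}) x :
  x \in X -> x \notin D -> (#|X| <= w)%N ->
  exists i, forall y, y \in D -> y \in X -> c y != i.
Proof.
move=> xX xD cardX.
have [|i hi] := avoided_colour c (N := X :&: D).
  apply: leq_trans cardX; apply: proper_card; rewrite properE finset.subsetIl /=.
  by apply/subsetPn; exists x => //; rewrite inE (negbTE xD) andbF.
by exists i => y yD yX; apply: hi; rewrite inE yX.
Qed.

Section KempeChain.
Variables (D : {set E}) (c : E -> 'I_w) (i j : 'I_w) (a0 : A) (b0 : B) (x1 : E).
Hypothesis Pc : proper_on D c.
Hypothesis x1D : x1 \in D.
Hypothesis qx1 : q x1 = b0.
Hypothesis cx1 : c x1 = i.
Hypothesis i_free_a0 : forall x, x \in D -> p x = a0 -> c x != i.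
Hypothesis j_free_b0 : forall x, x \in D -> q x = b0 -> c x != j.

(* The Kempe chain is the i/j-alternating path from x1; swapping i and j along
   it frees colour i at a0 and at b0. *)
Definition kempe_next (x : E) : option E :=
  if c x == i then [pick y in D | (p y == p x) && (c y == j)]
  else [pick y in D | (q y == q x) && (c y == i)].

Fixpoint kempe_walk n : option E :=
  if n is n'.+1 then (if kempe_walk n' is Some x then kempe_next x else None)
  else Some x1.

Definition kempe_chain : {set E} := [set x | `[< exists n, kempe_walk n = Some x >]].

Lemma kempe_colours_neq : i != j.
Proof. by apply: contraNneq (j_free_b0 x1D qx1) => <-; rewrite cx1. Qed.

Lemma kempe_next_i x y : c x = i -> kempe_next x = Some y ->
  [/\ y \in D, p y = p x & c y = j].
Proof.
rewrite /kempe_next => ->; rewrite eqxx.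
by case: pickP => // z /andP[zD /andP[/eqP pz /eqP cz]] [<-].
Qed.

Lemma kempe_next_j x y : c x != i -> kempe_next x = Some y ->
  [/\ y \in D, q y = q x & c y = i].
Proof.
rewrite /kempe_next => /negbTE ->.
by case: pickP => // z /andP[zD /andP[/eqP qz /eqP cz]] [<-].
Qed.

Lemma kempe_next_i_defined x y : c x = i -> y \in D -> p y = p x -> c y = j ->
  exists z, kempe_next x = Some z.
Proof.
move=> cx yD pyx cy; rewrite /kempe_next cx eqxx.
case: pickP => [z _|none]; first by exists z.
by move: (none y); rewrite yD pyx cy !eqxx.
Qed.

Lemma kempe_next_j_defined x y : c x != i -> y \in D -> q y = q x -> c y = i ->
  exists z, kempe_next x = Some z.
Proof.
move=> cx yD qyx cy; rewrite /kempe_next (negbTE cx).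
case: pickP => [z _|none]; first by exists z.
by move: (none y); rewrite yD qyx cy !eqxx.
Qed.

Lemma kempe_chain_sub x : x \in kempe_chain -> x \in D /\ (c x = i \/ c x = j).
Proof.
rewrite finset.in_set => /asboolP[n]; elim: n x => [|n IH] x /=.
  by case=> <-; split => //; left.
case: (kempe_walk n) IH => // z /(_ z erefl)[_ cz].
case: (eqVneq (c z) i) => [/kempe_next_i|/kempe_next_j] h /h[xD _ cx]; split => //.
  by right.
by left.
Qed.

Lemma kempe_chain_start : x1 \in kempe_chain.
Proof. by rewrite finset.in_set; apply/asboolP; exists 0. Qed.

Lemma kempe_chain_next x y : x \in kempe_chain -> kempe_next x = Some y ->
  y \in kempe_chain.
Proof.
rewrite !finset.in_set => /asboolP[n hn] hxy; apply/asboolP.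
by exists n.+1 => /=; rewrite hn.
Qed.

Lemma kempe_chain_prev x : x \in kempe_chain -> x != x1 ->
  exists2 z, z \in kempe_chain & kempe_next z = Some x.
Proof.
rewrite finset.in_set => /asboolP[[|n]] /=; first by case=> ->; rewrite eqxx.
case hn: (kempe_walk n) => [z|] // hz _; exists z => //.
by rewrite finset.in_set; apply/asboolP; exists n.
Qed.

Lemma kempe_chain_closed_i x y : x \in kempe_chain -> c x = i ->
  y \in D -> linked x y -> c y = j -> y \in kempe_chain.
Proof.
move=> xK cx yD lxy cy; have [xD _] := kempe_chain_sub xK.
case: lxy => lxy.
  have [z xz] := kempe_next_i_defined cx yD (esym lxy) cy.
  have [zD pz cz] := kempe_next_i cx xz.
  suff <- : z = y by apply: kempe_chain_next xz.
  by apply: (proper_on_linked_eq Pc zD yD); [left; rewrite pz | rewrite cz cy].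
have nx1 : x != x1.
  by apply/eqP => ex; move: (j_free_b0 yD); rewrite -lxy ex qx1 cy eqxx => /(_ erefl).
have [z zK zx] := kempe_chain_prev xK nx1.
have [zD _] := kempe_chain_sub zK.
have ncz : c z != i.
  apply: contraTneq kempe_colours_neq => cz.
  by have [_ _] := kempe_next_i cz zx; rewrite cx => ->; rewrite eqxx.
have [_ qz cz] := kempe_next_j ncz zx.
have czj : c z = j by case: (kempe_chain_sub zK) => _ [cz'|//]; rewrite cz' eqxx in ncz.
suff -> : y = z by [].
by apply: (proper_on_linked_eq Pc yD zD); [right; rewrite -lxy qz | rewrite cy czj].
Qed.

Lemma kempe_chain_closed_j x y : x \in kempe_chain -> c x = j ->
  y \in D -> linked x y -> c y = i -> y \in kempe_chain.
Proof.
move=> xK cx yD lxy cy; have [xD _] := kempe_chain_sub xK.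
have ncx : c x != i by rewrite cx eq_sym kempe_colours_neq.
case: lxy => lxy; last first.
  have [z xz] := kempe_next_j_defined ncx yD (esym lxy) cy.
  have [zD qz cz] := kempe_next_j ncx xz.
  suff <- : z = y by apply: kempe_chain_next xz.
  by apply: (proper_on_linked_eq Pc zD yD); [right; rewrite qz | rewrite cz cy].
have nx1 : x != x1 by apply: contraNneq ncx => ->; rewrite cx1.
have [z zK zx] := kempe_chain_prev xK nx1.
have [zD _] := kempe_chain_sub zK.
case: (eqVneq (c z) i) => cz; last first.
  by have [_ _] := kempe_next_j cz zx; rewrite cx => ej; move: ncx; rewrite cx ej eqxx.
have [_ pz _] := kempe_next_i cz zx.
suff -> : y = z by [].
by apply: (proper_on_linked_eq Pc yD zD); [left; rewrite -lxy pz | rewrite cy cz].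
Qed.

Lemma kempe_chain_closed x y : x \in kempe_chain -> y \in D -> x != y ->
  linked x y -> c y \in [:: i; j] -> y \in kempe_chain.
Proof.
move=> xK yD nxy lxy; have [xD cx] := kempe_chain_sub xK.
have cxy : c x != c y by apply: Pc.
rewrite mem_seq2 => /orP[]/eqP cy; case: cx cxy => cx; rewrite cx cy ?eqxx // => _.
- exact: kempe_chain_closed_j xK cx yD lxy cy.
- exact: kempe_chain_closed_i xK cx yD lxy cy.
Qed.

Definition swap_colour (k : 'I_w) : 'I_w := if k == i then j else i.

Definition kempe_swap (x : E) : 'I_w :=
  if x \in kempe_chain then swap_colour (c x) else c x.

Lemma swap_colourK : {in [:: i; j], involutive swap_colour}.
Proof.
have nji : j != i by rewrite eq_sym kempe_colours_neq.
by move=> k; rewrite !inE => /orP[]/eqP->; rewrite /swap_colour ?eqxx ?(negbTE nji) ?eqxx.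
Qed.

Lemma kempe_swap_proper : proper_on D kempe_swap.
Proof.
have chain_col x : x \in kempe_chain -> c x \in [:: i; j].
  by move=> /kempe_chain_sub[_ [] ->]; rewrite !inE eqxx ?orbT.
have mixed x y : x \in D -> y \in D -> x != y -> linked x y ->
    x \in kempe_chain -> y \notin kempe_chain -> swap_colour (c x) != c y.
  move=> xD yD nxy lxy xK yK.
  have cy : c y \notin [:: i; j].
    by apply: contraNN yK; exact: kempe_chain_closed xK yD nxy lxy.
  apply: contraNneq cy => <-; rewrite /swap_colour !inE.
  by case: ifP; rewrite eqxx ?orbT.
move=> x y xD yD nxy lxy; rewrite /kempe_swap.
case: (boolP (x \in kempe_chain)) => xK; case: (boolP (y \in kempe_chain)) => yK.
- apply: contra (Pc xD yD nxy lxy) => /eqP/(congr1 swap_colour).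
  by rewrite !swap_colourK ?chain_col // => ->.
- exact: mixed.
- rewrite eq_sym; apply: mixed; rewrite 1?eq_sym //.
  by case: lxy => h; [left|right].
- exact: Pc.
Qed.

Lemma kempe_swap_free_a0 x : x \in D -> p x = a0 -> kempe_swap x != i.
Proof.
move=> xD px; rewrite /kempe_swap; case: ifP => xK; last exact: i_free_a0.
have [_ [cx|cx]] := kempe_chain_sub xK.
  by rewrite /swap_colour cx eqxx eq_sym kempe_colours_neq.
have nx1 : x != x1 by apply: contraTneq kempe_colours_neq => ex; rewrite -cx1 -cx ex eqxx.
have [z zK zx] := kempe_chain_prev xK nx1.
have [zD _] := kempe_chain_sub zK.
case: (eqVneq (c z) i) => cz.
  have [_ pz _] := kempe_next_i cz zx.
  by move: (i_free_a0 zD); rewrite -pz px cz eqxx => /(_ erefl).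
have [_ _ cxi] := kempe_next_j cz zx.
by move: kempe_colours_neq; rewrite -cxi cx eqxx.
Qed.

Lemma kempe_swap_free_b0 x : x \in D -> q x = b0 -> kempe_swap x != i.
Proof.
move=> xD qx; rewrite /kempe_swap; case: ifP => xK.
  have [_ [cx|cx]] := kempe_chain_sub xK.
    by rewrite /swap_colour cx eqxx eq_sym kempe_colours_neq.
  by move: (j_free_b0 xD qx); rewrite cx eqxx.
apply/eqP => cx.
suff ex : x = x1 by rewrite ex kempe_chain_start in xK.
by apply: (proper_on_linked_eq Pc xD x1D); [right; rewrite qx qx1 | rewrite cx cx1].
Qed.

End KempeChain.

Hypothesis card_fibre_p : forall a, (#|[set x | p x == a]| <= w)%N.
Hypothesis card_fibre_q : forall b, (#|[set x | q x == b]| <= w)%N.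

Lemma proper_colouring_on (D : {set E}) : exists c : E -> 'I_w, proper_on D c.
Proof.
elim: {D}#|D| {-2}D (erefl #|D|) => [|n IH] D cardD.
  case: (posnP w) => [w0|wpos].
    have E0 (x : E) : False.
      move: (card_fibre_p (p x)); rewrite w0 leqn0 cards_eq0 => /eqP/finset.setP/(_ x).
      by rewrite !inE eqxx.
    by exists (fun x => False_rect _ (E0 x)) => x; case: (E0 x).
  by exists (fun _ => Ordinal wpos) => x y; rewrite (cards0_eq cardD) inE.
have [x0 x0D] : exists x0, x0 \in D by apply/set0Pn; rewrite -card_gt0 cardD.
set D0 := D :\ x0.
have [c Pc] : exists c, proper_on D0 c.
  by apply: IH; move: (cardsD1 x0 D); rewrite x0D cardD add1n => -[].
have x0D0 : x0 \notin D0 by rewrite !inE eqxx.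
have -> : D = x0 |: D0 by rewrite finset.setD1K.
have x0p : x0 \in [set x | p x == p x0] by rewrite inE.
have x0q : x0 \in [set x | q x == q x0] by rewrite inE.
have [i free_i] := missing_colour c x0p x0D0 (card_fibre_p (p x0)).
have [j free_j] := missing_colour c x0q x0D0 (card_fibre_q (q x0)).
have free_p y : y \in D0 -> p y = p x0 -> c y != i.
  by move=> yD py; apply: free_i; rewrite // inE py.
have free_q y : y \in D0 -> q y = q x0 -> c y != j.
  by move=> yD qy; apply: free_j; rewrite // inE qy.
case: (boolP [exists y in D0, (q y == q x0) && (c y == i)]).
  case/exists_inP => x1 x1D /andP[/eqP qx1 /eqP cx1].
  exists (fun x => if x == x0 then i else kempe_swap D0 c i j x1 x).
  apply: proper_on_setU1 => //.
  - exact: (kempe_swap_proper Pc x1D qx1 cx1 free_q).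
  - exact: (kempe_swap_free_a0 x1D qx1 cx1 free_p free_q).
  - exact: (kempe_swap_free_b0 Pc x1D qx1 cx1 free_q).
move=> none; exists (fun x => if x == x0 then i else c x).
apply: proper_on_setU1 => // y yD qy; apply: contraNneq none => cy.
by apply/exists_inP; exists y => //; rewrite qy cy !eqxx.
Qed.

Theorem konig_edge_colouring :
  exists c : E -> 'I_w, forall x y, x != y -> linked x y -> c x != c y.
Proof.
have [c Pc] := proper_colouring_on [set: E].
by exists c => x y; apply: Pc; rewrite inE.
Qed.

End KonigEdgeColouring.
Lemma cards3_le (T : finType) (a b c : T) : (#|[set a; b; c]| <= 3)%N.
Proof.
apply: leq_trans (leq_card_setU _ _) _; rewrite cards1 cardsU1 cards1.
by case: (_ \notin _).
Qed.

Lemma cards3 (T : finType) (a b c : T) :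
  a != b -> a != c -> b != c -> #|[set a; b; c]| = 3.
Proof.
by move=> nab nac nbc; rewrite -finset.setUA cardsU1 cards2 nbc !inE negb_or nab nac.
Qed.

Section Cliques.
Variables (V : finType) (e : rel V).

Lemma clique_card_le (C : {set V}) : is_clique e C -> (#|C| <= clique_number e)%N.
Proof. exact: leq_bigmax_cond. Qed.

Lemma clique_number_gt0 (v : V) : (0 < clique_number e)%N.
Proof.
suff : is_clique e [set v] by move/clique_card_le; rewrite cards1.
by apply/forall_inP => x /set1P-> ; apply/forall_inP => y /set1P->; rewrite eqxx.
Qed.

Lemma is_clique_adj (C : {set V}) u v : is_clique e C -> u \in C -> v \in C -> u != v -> e u v.
Proof.
by move=> /forall_inP/(_ u) hC uC vC nuv; move: (hC uC) => /forall_inP/(_ v vC)/implyP; apply.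
Qed.

End Cliques.

Section LineGraph.
Variables (V : finType) (e : rel V) (T : finType) (f : V -> {set T}).
Hypothesis e_sym : symmetric e.
Hypothesis e_irr : irreflexive e.
Hypothesis edge_pair : forall v, exists x y, x != y /\ f v = [set x; y].
Hypothesis edge_inj : injective f.
Hypothesis adjE : forall u v, u != v -> (e u v <-> f u :&: f v != finset.set0).

Local Notation w := (clique_number e).

Definition star (x : T) : {set V} := [set v | x \in f v].

Lemma edges_meet_adj u v s : u != v -> s \in f u -> s \in f v -> e u v.
Proof. by move=> nuv su sv; apply/(adjE nuv)/set0Pn; exists s; rewrite inE su sv. Qed.

Lemma adj_edges_meet u v : u != v -> e u v -> exists2 s, s \in f u & s \in f v.
Proof. by move=> nuv /(adjE nuv)/set0Pn[s]; rewrite inE => /andP[]; exists s. Qed.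

Lemma star_clique x : is_clique e (star x).
Proof.
apply/forall_inP => u; rewrite inE => ux; apply/forall_inP => v; rewrite inE => vx.
by apply/implyP => nuv; apply: edges_meet_adj ux vx.
Qed.

Lemma star_card_le x : (#|star x| <= w)%N.
Proof. exact/clique_card_le/star_clique. Qed.

Lemma card_edge v : #|f v| = 2.
Proof. by have [x [y [nxy ->]]] := edge_pair v; rewrite cards2 nxy. Qed.

Lemma edge_other_end v a : a \in f v -> exists b, b != a /\ f v = [set a; b].
Proof.
have [x [y [nxy ->]]] := edge_pair v; rewrite !inE => /orP[]/eqP->.
  by exists y; rewrite eq_sym.
by exists x; split => //; rewrite finset.setUC.
Qed.

Lemma edge_eq_pair v a b : a != b -> a \in f v -> b \in f v -> f v = [set a; b].
Proof.
move=> nab av bv; apply/eqP; rewrite eq_sym finset.eqEcard card_edge cards2 nab andbT.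
by apply/fintype.subsetP => z; rewrite !inE => /orP[]/eqP->.
Qed.

Lemma eq_of_edge_ends u u' a b : a != b -> a \in f u -> b \in f u ->
  f u' = [set a; b] -> u = u'.
Proof. by move=> nab au bu fu'; apply: edge_inj; rewrite fu'; apply: edge_eq_pair. Qed.

Lemma clique_third_edge (C : {set V}) u1 u2 u3 x y : is_clique e C ->
  u1 \in C -> u2 \in C -> u3 \in C -> x != y -> f u1 = [set x; y] ->
  x \notin f u2 -> y \notin f u3 ->
  exists z, [/\ f u2 = [set y; z], f u3 = [set x; z], z != x & z != y].
Proof.
move=> hC u1C u2C u3C nxy fu1 xu2 yu3.
have n12 : u1 != u2 by apply: contraNneq xu2 => <-; rewrite fu1 !inE eqxx.
have n13 : u1 != u3 by apply: contraNneq yu3 => <-; rewrite fu1 !inE eqxx orbT.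
have n23 : u2 != u3.
  apply: contraNneq xu2 => ->.
  have [s su1 su3] := adj_edges_meet n13 (is_clique_adj hC u1C u3C n13).
  by move: su1 su3; rewrite fu1 !inE => /orP[]/eqP-> //; rewrite (negbTE yu3).
have yu2 : y \in f u2.
  have [s su1 su2] := adj_edges_meet n12 (is_clique_adj hC u1C u2C n12).
  by move: su1 su2; rewrite fu1 !inE => /orP[]/eqP-> //; rewrite (negbTE xu2).
have xu3 : x \in f u3.
  have [s su1 su3] := adj_edges_meet n13 (is_clique_adj hC u1C u3C n13).
  by move: su1 su3; rewrite fu1 !inE => /orP[]/eqP-> //; rewrite (negbTE yu3).
have [z [nzy fu2]] := edge_other_end yu2.
have [z' [nzx fu3]] := edge_other_end xu3.
have nzx' : z != x by apply: contraNneq xu2 => <-; rewrite fu2 !inE eqxx orbT.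
have nzy' : z' != y by apply: contraNneq yu3 => <-; rewrite fu3 !inE eqxx orbT.
have [s su2 su3] := adj_edges_meet n23 (is_clique_adj hC u2C u3C n23).
suff zz : z' = z by exists z; rewrite -{2}zz.
move: su2 su3; rewrite fu2 fu3 !inE => /orP[]/eqP-> /orP[]/eqP h //.
- by move: nxy; rewrite h eqxx.
- by move: nzy'; rewrite h eqxx.
- by move: nzx'; rewrite h eqxx.
Qed.

Lemma clique_sub_triangle (C : {set V}) u1 u2 u3 x y z : is_clique e C ->
  u1 \in C -> u2 \in C -> u3 \in C -> x != y -> z != x -> z != y ->
  f u1 = [set x; y] -> f u2 = [set y; z] -> f u3 = [set x; z] ->
  C \subset [set u1; u2; u3].
Proof.
move=> hC u1C u2C u3C nxy nzx nzy fu1 fu2 fu3.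
apply/fintype.subsetP => u uC; rewrite !inE.
case: (eqVneq u u1) => [//|n1]; case: (eqVneq u u2) => [//|n2]; case: (eqVneq u u3) => [//|n3].
have [a1 a1u a1v] := adj_edges_meet n1 (is_clique_adj hC uC u1C n1).
have [a2 a2u a2v] := adj_edges_meet n2 (is_clique_adj hC uC u2C n2).
have [a3 a3u a3v] := adj_edges_meet n3 (is_clique_adj hC uC u3C n3).
have nxz : x != z by rewrite eq_sym.
have nyz : y != z by rewrite eq_sym.
move: a1v a2v a3v; rewrite fu1 fu2 fu3 !inE.
move=> /orP[]/eqP ea1 /orP[]/eqP ea2 /orP[]/eqP ea3; subst a1 a2 a3.
all: exfalso.
all: first [ apply: (negP n1); apply/eqP; apply: (eq_of_edge_ends _ _ _ fu1); done
           | apply: (negP n2); apply/eqP; apply: (eq_of_edge_ends _ _ _ fu2); done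
           | apply: (negP n3); apply/eqP; apply: (eq_of_edge_ends _ _ _ fu3); done ].
Qed.

Variables (Q : {set {set V}}) (k : nat).
Hypothesis Q_partition : finset.partition Q [set: V].
Hypothesis Q_cliques : forall C, C \in Q -> is_clique e C /\ #|C| = w.
Hypothesis e_regular : forall v, #|nbhd e v| = k.
Hypothesis k_gt3 : (3 < k)%N.

Definition block v := finset.pblock Q v.

Lemma mem_cover_Q v : v \in finset.cover Q.
Proof. by case/and3P: Q_partition => /eqP-> _ _; rewrite inE. Qed.

Lemma mem_block v : v \in block v.
Proof. by rewrite /block finset.mem_pblock mem_cover_Q. Qed.

Lemma block_in_Q v : block v \in Q.
Proof. exact/finset.pblock_mem/mem_cover_Q. Qed.

Lemma block_clique v : is_clique e (block v).
Proof. by have [] := Q_cliques (block_in_Q v). Qed.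

Lemma card_block v : #|block v| = w.
Proof. by have [] := Q_cliques (block_in_Q v). Qed.

Lemma block_eq u v : u \in block v -> block u = block v.
Proof. by move=> uv; apply: finset.same_pblock => //; case/and3P: Q_partition. Qed.

Lemma blocks_disjoint u v : block u != block v -> [disjoint block u & block v].
Proof.
move=> nuv; case/and3P: Q_partition => _ /finset.trivIsetP triv _.
exact: triv (block_in_Q u) (block_in_Q v) nuv.
Qed.

Lemma degree_le_stars v a b : f v = [set a; b] ->
  (k <= (#|star a|).-1 + (#|star b|).-1)%N.
Proof.
move=> fv; rewrite -(e_regular v).
have sa : v \in star a by rewrite inE fv !inE eqxx.
have sb : v \in star b by rewrite inE fv !inE eqxx orbT.
rewrite (cardsD1 v (star a)) (cardsD1 v (star b)) sa sb /=.
apply: leq_trans (leq_card_setU _ _); apply: subset_leq_card.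
apply/fintype.subsetP => u; rewrite !inE => euv.
have nvu : v != u by apply: contraTneq euv => ->; rewrite e_irr.
have [s sv su] := adj_edges_meet nvu euv.
by rewrite eq_sym nvu; move: sv; rewrite fv !inE => /orP[]/eqP <-; rewrite su ?orbT.
Qed.

Definition star_block v := [exists x, block v \subset star x].

Lemma star_block_in_block u t : u \in block t -> star_block u = star_block t.
Proof. by move=> ut; rewrite /star_block (block_eq ut). Qed.

Lemma triangle_block t : ~~ star_block t -> exists t2 t3 x y z,
  [/\ f t = [set x; y], f t2 = [set y; z], f t3 = [set x; z] &
   [&& x != y, z != x, z != y, t2 \in block t, t3 \in block t &
      block t \subset [set t; t2; t3]]].
Proof.
move=> nW; have [x [y [nxy ft]]] := edge_pair t.
have [sx|/subsetPn[t2 t2b xt2]] := boolP (block t \subset star x).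
  by case/existsP: nW; exists x.
have [sy|/subsetPn[t3 t3b yt3]] := boolP (block t \subset star y).
  by case/existsP: nW; exists y.
rewrite inE in xt2; rewrite inE in yt3.
have [z [ft2 ft3 nzx nzy]] :=
  clique_third_edge (block_clique t) (mem_block t) t2b t3b nxy ft xt2 yt3.
exists t2, t3, x, y, z; split => //; rewrite nxy nzx nzy t2b t3b /=.
exact: clique_sub_triangle (block_clique t) (mem_block t) t2b t3b nxy nzx nzy ft ft2 ft3.
Qed.

Lemma clique_number_eq3 t : ~~ star_block t -> w = 3.
Proof.
move=> nW; have [a [b [nab ft]]] := edge_pair t.
have [t2 [t3 [x [y [z [_ _ _ /and5P[_ _ _ _ /andP[_ sub]]]]]]]] := triangle_block nW.
have := subset_leq_card sub; rewrite card_block.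
have := degree_le_stars ft; have := star_card_le a; have := star_card_le b.
have := cards3_le t t2 t3; move: k_gt3; clear; lia.
Qed.

Definition block_centre v : option T := [pick x | block v \subset star x].
Definition far_end v : option T := [pick y in f v | Some y != block_centre v].

Lemma star_block_centre v : star_block v ->
  exists x, [/\ block_centre v = Some x, star x = block v & x \in f v].
Proof.
rewrite /star_block /block_centre; case: pickP => [x hx _ | none /existsP[x]]; last first.
  by rewrite none.
exists x; split => //.
  by apply/eqP; rewrite eq_sym finset.eqEcard hx card_block star_card_le.
by move/fintype.subsetP: hx => /(_ v (mem_block v)); rewrite inE.
Qed.

Lemma star_block_ends v : star_block v -> exists x y,
  [/\ block_centre v = Some x, far_end v = Some y, star x = block v, x != y &
      f v = [set x; y]].
Proof.
move=> Wv; have [x [cx sx xf]] := star_block_centre Wv.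
have [y [nyx fv]] := edge_other_end xf.
exists x, y; split => //; last by rewrite eq_sym.
rewrite /far_end; case: pickP => [y' /andP[y'f]|none].
  rewrite cx => ny'x; congr Some; move: y'f; rewrite fv !inE => /orP[]/eqP // eqx.
  by move: ny'x; rewrite eqx eqxx.
by move: (none y); rewrite fv !inE eqxx orbT cx /= (inj_eq (@Some_inj _)) nyx.
Qed.

(* The bipartite multigraph for Konig's theorem: a vertex of a star block joins
   its block to its far end, far ends on a triangle block being merged into that
   block.  Vertices of triangle blocks get private labels and are coloured last. *)
Definition end_class (o : option T) : {set V} + option T :=
  if o is Some y then
    (if [pick u in star y | ~~ star_block u] is Some u then inl (block u) else inr (Some y))
  else inr None.

Definition block_label v : {set V} + V :=
  if star_block v then inl (block v) else inr v.

Definition end_label v : ({set V} + option T) + V :=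
  if star_block v then inl (end_class (far_end v)) else inr v.

Lemma end_class_inl y B : end_class (Some y) = inl B ->
  exists u, [/\ u \in star y, ~~ star_block u & block u = B].
Proof. by rewrite /end_class; case: pickP => // u /andP[uy nWu] [<-]; exists u. Qed.

Lemma end_classP y :
  (exists B, end_class (Some y) = inl B) \/ end_class (Some y) = inr (Some y).
Proof. by rewrite /end_class; case: pickP => [u _|_]; [left; eexists | right]. Qed.

Lemma star_blocks_linked u v : star_block u -> star_block v -> u != v -> e u v ->
  linked block_label end_label u v.
Proof.
move=> Wu Wv nuv euv; rewrite /linked /block_label /end_label Wu Wv.
have [xu [yu [_ fyu su _ fu]]] := star_block_ends Wu.
have [xv [yv [_ fyv sv _ fv]]] := star_block_ends Wv.
have [s s1 s2] := adj_edges_meet nuv euv.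
move: s1 s2; rewrite fu fv !inE => /orP[]/eqP->.
  by move=> xuv; left; congr inl; apply/esym/block_eq; rewrite -su inE fv !inE.
move=> /orP[]/eqP yxv; last by right; rewrite fyu fyv yxv.
by left; congr inl; apply: block_eq; rewrite -sv inE fu yxv !inE eqxx orbT.
Qed.

Lemma triangle_block_mate t a : ~~ star_block t -> a \in f t ->
  exists2 t', t' \in block t & (t' != t) && (a \in f t').
Proof.
move=> nW; have [t2 [t3 [x [y [z [ft f2 f3 /and5P[nxy nzx nzy t2b /andP[t3b _]]]]]]]] :=
  triangle_block nW.
have zt : z \notin f t by rewrite ft !inE negb_or nzx nzy.
rewrite ft !inE => /orP[]/eqP->.
- exists t3 => //; rewrite f3 !inE eqxx andbT.
  by apply: contraNneq zt => <-; rewrite f3 !inE eqxx orbT.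
- exists t2 => //; rewrite f2 !inE eqxx andbT.
  by apply: contraNneq zt => <-; rewrite f2 !inE eqxx orbT.
Qed.

Lemma triangle_star_meet_ge2 t a : ~~ star_block t -> a \in f t ->
  (2 <= #|star a :&: block t|)%N.
Proof.
move=> nW af; have [t' t'b /andP[nt' at']] := triangle_block_mate nW af.
by apply/card_gt1P; exists t', t; rewrite !inE af at' t'b mem_block.
Qed.

Lemma triangle_star_meet_le2 t a : ~~ star_block t -> (#|star a :&: block t| <= 2)%N.
Proof.
move=> nW; have : star a :&: block t \proper block t.
  rewrite finset.properEneq finset.subsetIr andbT; apply: contraNneq nW => h.
  by apply/existsP; exists a; rewrite -h finset.subsetIl.
by move/proper_card; rewrite card_block (clique_number_eq3 nW).
Qed.

Lemma triangle_block_ends t : ~~ star_block t ->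
  exists x y z, forall u, u \in block t -> f u \subset [set x; y; z].
Proof.
move=> nW; have [t2 [t3 [x [y [z [ft f2 f3 /and5P[_ _ _ _ /andP[_ sub]]]]]]]] :=
  triangle_block nW.
exists x, y, z => u /(fintype.subsetP sub); rewrite !inE => /orP[/orP[]|]/eqP->;
  rewrite ?ft ?f2 ?f3; apply/fintype.subsetP => s; rewrite !inE => /orP[]/eqP->;
  by rewrite eqxx ?orbT.
Qed.

Lemma triangle_block_of_end u u' a : ~~ star_block u -> ~~ star_block u' ->
  a \in f u -> a \in f u' -> block u = block u'.
Proof.
move=> nW nW' au au'; apply/eqP; apply: contraT => nb.
have disj : (star a :&: block u) :&: (star a :&: block u') = finset.set0.
  apply/eqP; rewrite -finset.subset0 -(disjoint_setI0 (blocks_disjoint nb)).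
  by apply/fintype.subsetP => v; rewrite !inE => /andP[/andP[_ ->] /andP[_ ->]].
have : (#|(star a :&: block u) :|: (star a :&: block u')| <= w)%N.
  apply: leq_trans (star_card_le a); apply: subset_leq_card.
  by rewrite finset.subUset !finset.subsetIl.
rewrite cardsU disj cards0 subn0 (clique_number_eq3 nW).
have := triangle_star_meet_ge2 nW au; have := triangle_star_meet_ge2 nW' au'.
by clear; lia.
Qed.

Lemma card_star_triangle_end t a : ~~ star_block t -> a \in f t -> #|star a| = 3.
Proof.
move=> nW af; have [b [nba ft]] := edge_other_end af.
have := degree_le_stars ft; have := star_card_le a; have := star_card_le b.
by rewrite (clique_number_eq3 nW); move: k_gt3; clear; lia.
Qed.

Lemma triangle_end_pendant t a : ~~ star_block t -> a \in f t ->
  exists g, [/\ star_block g, a \in f g, far_end g = Some a &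
               end_label g = inl (inl (block t))].
Proof.
move=> nW af.
have : ~~ (star a \subset block t).
  apply/negP => /finset.setIidPl h; have := triangle_star_meet_le2 a nW.
  by rewrite h (card_star_triangle_end nW af).
case/subsetPn => g; rewrite inE => ag gnb.
have Wg : star_block g.
  apply: contraNT gnb => nWg.
  by rewrite -(triangle_block_of_end nWg nW ag af) mem_block.
have [x0 [y0 [cg yg sg nxy fg]]] := star_block_ends Wg.
have ay : a = y0.
  move: ag; rewrite fg !inE => /orP[]/eqP // ax.
  have : t \in block g by rewrite -sg inE -ax.
  by move/block_eq => bt; move: gnb; rewrite bt mem_block.
subst y0; exists g; split => //.
rewrite /end_label Wg yg /=; case: pickP => [u /andP[ua nWu]|none].
  by rewrite (triangle_block_of_end nWu nW _ af) //; move: ua; rewrite inE.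
by move: (none t); rewrite inE af nW.
Qed.

Lemma star_block_at_triangle_end_uniq a u v v' : ~~ star_block u -> a \in f u ->
  star_block v -> star_block v' -> a \in f v -> a \in f v' -> v = v'.
Proof.
move=> nWu au Wv Wv' av av'; apply/eqP; apply: contraT => nvv.
have disj : [set v; v'] :&: (star a :&: block u) = finset.set0.
  apply/eqP; rewrite -finset.subset0; apply/fintype.subsetP => z.
  rewrite !inE => /andP[/orP[]/eqP-> /andP[_ zb]].
  + by move: nWu; rewrite -(star_block_in_block zb) Wv.
  + by move: nWu; rewrite -(star_block_in_block zb) Wv'.
have : (#|[set v; v'] :|: (star a :&: block u)| <= w)%N.
  apply: leq_trans (star_card_le a); apply: subset_leq_card.
  rewrite finset.subUset finset.subsetIl andbT.
  by apply/fintype.subsetP => z; rewrite !inE => /orP[]/eqP->.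
rewrite cardsU cards2 nvv disj cards0 subn0 (clique_number_eq3 nWu).
by have := triangle_star_meet_ge2 nWu au; clear; lia.
Qed.

Lemma card_block_label_fibre l : (#|[set v | block_label v == l]| <= w)%N.
Proof.
have [->|[v1]] := set_0Vmem [set v | block_label v == l]; first by rewrite cards0.
rewrite inE /block_label; case: ifP => Wv1 /eqP <-.
  rewrite -(card_block v1); apply: subset_leq_card; apply/fintype.subsetP => v.
  by rewrite inE /block_label; case: ifP => // _ /eqP [<-]; apply: mem_block.
apply: leq_trans (clique_number_gt0 e v1); rewrite -(cards1 v1).
apply: subset_leq_card; apply/fintype.subsetP => v; rewrite !inE /block_label.
by case: ifP => // _ /eqP [->].
Qed.

Lemma card_end_label_triangle u1 : ~~ star_block u1 ->
  (#|[set v | end_label v == inl (inl (block u1))]| <= w)%N.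
Proof.
move=> nWu1; have [x [y [z ends]]] := triangle_block_ends nWu1.
set S := [set v | end_label v == _].
have memS v : v \in S -> exists a, [/\ star_block v, far_end v = Some a, a \in f v &
    exists2 u, (u \in star a) && ~~ star_block u & u \in block u1].
  rewrite inE /end_label; case: ifP => // Wv /eqP [].
  have [xv [a [_ fa _ _ fv]]] := star_block_ends Wv.
  rewrite fa => /end_class_inl[u [ua nWu bu]].
  exists a; split => //; first by rewrite fv !inE eqxx orbT.
  by exists u; [rewrite ua nWu | rewrite -bu mem_block].
rewrite -(card_in_imset (f := far_end)); last first.
  move=> v v' /memS[a [Wv fa av [u /andP[ua nWu] _]]] /memS[a' [Wv' fa' av' _]].
  rewrite fa fa' => -[ea]; subst a'.
  have au : a \in f u by move: ua; rewrite inE.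
  exact: (star_block_at_triangle_end_uniq nWu au Wv Wv' av av').
rewrite (clique_number_eq3 nWu1); apply: leq_trans _ (cards3_le (Some x) (Some y) (Some z)).
apply: subset_leq_card; apply/fintype.subsetP => o.
case/imsetP => v /memS[a [Wv fa av [u /andP[ua nWu] ub]]] ->.
rewrite fa; move: ua; rewrite inE => /(fintype.subsetP (ends u ub)).
by rewrite !inE => /orP[/orP[]|]/eqP->; rewrite eqxx ?orbT.
Qed.

Lemma card_end_label_point y : (#|[set v | end_label v == inl (inr (Some y))]| <= w)%N.
Proof.
apply: leq_trans (star_card_le y); apply: subset_leq_card; apply/fintype.subsetP => v.
rewrite !inE /end_label; case: ifP => // Wv /eqP [].
have [xv [a [_ fa _ _ fv]]] := star_block_ends Wv; rewrite fa.
by case: (end_classP a) => [[B ->]|->] // [<-]; rewrite fv !inE eqxx orbT.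
Qed.

Lemma card_end_label_fibre l : (#|[set v | end_label v == l]| <= w)%N.
Proof.
have [->|[v1]] := set_0Vmem [set v | end_label v == l]; first by rewrite cards0.
rewrite inE /end_label; case: ifP => Wv1 /eqP <-; last first.
  apply: leq_trans (clique_number_gt0 e v1); rewrite -(cards1 v1).
  apply: subset_leq_card; apply/fintype.subsetP => v; rewrite !inE /end_label.
  by case: ifP => // _ /eqP [->].
have [_ [y [_ -> _ _ _]]] := star_block_ends Wv1.
case: (end_classP y) => [[B yB]|->]; last exact: card_end_label_point.
rewrite yB; have [u [_ nWu <-]] := end_class_inl yB.
exact: card_end_label_triangle.
Qed.

Section ExtendColouring.
Variable c : V -> 'I_w.
Hypothesis c_proper : forall u v, u != v -> linked block_label end_label u v -> c u != c v.

Definition extend_colouring v :=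
  if star_block v then c v
  else odflt (c v) [pick j | [forall u, (star_block u && e v u) ==> (c u != j)]].

Lemma free_colour t : ~~ star_block t ->
  exists j, forall u, star_block u -> e t u -> c u != j.
Proof.
move=> nW; have [a [b [nab ft]]] := edge_pair t.
have aft : a \in f t by rewrite ft !inE eqxx.
have bft : b \in f t by rewrite ft !inE eqxx orbT.
have [ga [Wa aga _ _]] := triangle_end_pendant nW aft.
have [gb [Wb bgb _ _]] := triangle_end_pendant nW bft.
have sub : [set u | star_block u && e t u] \subset [set ga; gb].
  apply/fintype.subsetP => u; rewrite !inE => /andP[Wu etu].
  have ntu : t != u by apply: contraNneq nW => ->.
  have [s st su] := adj_edges_meet ntu etu.
  move: st; rewrite ft !inE => /orP[]/eqP hs; subst s.
  - by rewrite (star_block_at_triangle_end_uniq nW aft Wu Wa su aga) eqxx.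
  - by rewrite (star_block_at_triangle_end_uniq nW bft Wu Wb su bgb) eqxx orbT.
have [|j hj] := avoided_colour c (N := [set u | star_block u && e t u]).
  apply: leq_ltn_trans (subset_leq_card sub) _.
  by rewrite cards2 (clique_number_eq3 nW); case: (_ != _).
by exists j => u Wu etu; apply: hj; rewrite inE Wu etu.
Qed.

Lemma extend_colouring_star_nbr t u : ~~ star_block t -> star_block u -> e t u ->
  c u != extend_colouring t.
Proof.
move=> nW; rewrite /extend_colouring (negbTE nW); case: pickP => [j /forallP hj | none] /=.
  by move=> Wu etu; have := hj u; rewrite Wu etu.
have [j hj] := free_colour nW; move: (none j) => /negbT/negP[].
by apply/forallP => u'; apply/implyP => /andP[Wu' e']; apply: hj.
Qed.

(* The pendant vertices g1, g2, g3 at the three corners of the triangle share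
   its end label, so they use all three colours; u avoids the two at its own
   ends and so takes the colour of the third, which v avoids. *)
Lemma extend_colouring_triangle u v : ~~ star_block u -> ~~ star_block v ->
  u != v -> e u v -> extend_colouring u != extend_colouring v.
Proof.
move=> Wu Wv nuv euv.
have [s su sv] := adj_edges_meet nuv euv.
have same_block := triangle_block_of_end Wu Wv su sv.
have [p1 [nps fu]] := edge_other_end su.
have : ~~ (f v \subset f u).
  apply/negP => sub; move: nuv; rewrite (edge_inj (_ : f v = f u)) ?eqxx //.
  by apply/eqP; rewrite finset.eqEcard sub !card_edge.
case/subsetPn => p3 p3v p3u.
have sfu : s \in f u by rewrite fu !inE eqxx.
have p1u : p1 \in f u by rewrite fu !inE eqxx orbT.
have [g1 [W1 s1 y1 q1]] := triangle_end_pendant Wu sfu.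
have [g2 [W2 s2 y2 q2]] := triangle_end_pendant Wu p1u.
have [g3 [W3 s3 y3 q3]] := triangle_end_pendant Wv p3v.
have n12 : g1 != g2 by apply: contraNneq nps => e12; move: y1; rewrite e12 y2 => -[/eqP].
have n13 : g1 != g3 by apply: contraNneq p3u => e13; move: y1; rewrite e13 y3 => -[->].
have n23 : g2 != g3 by apply: contraNneq p3u => e23; move: y2; rewrite e23 y3 => -[->].
have c12 : c g1 != c g2 by apply: c_proper => //; right; rewrite q1 q2.
have c13 : c g1 != c g3 by apply: c_proper => //; right; rewrite q1 q3 same_block.
have c23 : c g2 != c g3 by apply: c_proper => //; right; rewrite q2 q3 same_block.
have ng1 : u != g1 by apply: contraNneq Wu => ->.
have ng2 : u != g2 by apply: contraNneq Wu => ->.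
have ng3 : v != g3 by apply: contraNneq Wv => ->.
have h1 := extend_colouring_star_nbr Wu W1 (edges_meet_adj ng1 sfu s1).
have h2 := extend_colouring_star_nbr Wu W2 (edges_meet_adj ng2 p1u s2).
have h3 := extend_colouring_star_nbr Wv W3 (edges_meet_adj ng3 p3v s3).
have all_colours : [set c g1; c g2; c g3] = [set: 'I_w].
  apply/eqP; rewrite finset.eqEcard finset.subsetT cardsT card_ord cards3 //.
  by rewrite (clique_number_eq3 Wu).
apply/eqP => same; move/setP/(_ (extend_colouring u)): all_colours; rewrite !inE.
by rewrite eq_sym (negbTE h1) eq_sym (negbTE h2) same eq_sym (negbTE h3).
Qed.

Lemma extend_colouring_proper u v : e u v -> extend_colouring u != extend_colouring v.
Proof.
move=> euv; have nuv : u != v by apply: contraTneq euv => ->; rewrite e_irr.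
case: (boolP (star_block u)) => Wu; case: (boolP (star_block v)) => Wv.
- by rewrite /extend_colouring Wu Wv; apply: c_proper => //; apply: star_blocks_linked.
- by rewrite {1}/extend_colouring Wu; apply: extend_colouring_star_nbr; rewrite // e_sym.
- by rewrite eq_sym {1}/extend_colouring Wv; apply: extend_colouring_star_nbr.
- exact: extend_colouring_triangle.
Qed.

End ExtendColouring.

Lemma line_graph_proper_colouring :
  exists col : V -> 'I_w, forall u v, e u v -> col u != col v.
Proof.
have [c c_proper] := konig_edge_colouring card_block_label_fibre card_end_label_fibre.
by exists (extend_colouring c); apply: extend_colouring_proper.
Qed.

End LineGraph.

Theorem line_graph_colouring (V : finType) (e : rel V) (k : nat) :
  simple_graph e -> is_line_graph e -> regular_of e k -> (3 < k)%N ->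
  max_clique_partitionable e ->
  exists col : V -> 'I_(clique_number e), forall u v, e u v -> col u != col v.
Proof.
move=> [e_sym e_irr] [T [eH [[_ eH_irr] [f [f_inj f_edge _ adjE]]]]] reg k_gt3 [Q [QP QC]].
have edge_pair v : exists x y, x != y /\ f v = [set x; y].
  have [x [y [exy fv]]] := f_edge v; exists x, y; split => //.
  by apply: contraTneq exy => ->; rewrite eH_irr.
exact: (@line_graph_proper_colouring _ _ _ _ e_sym e_irr edge_pair f_inj adjE
          _ _ QP QC reg k_gt3).
Qed.

Section GraphEntropy.
Import Order.TTheory GRing.Theory Num.Theory.
Local Open Scope ring_scope.
Variables (R : realType) (V : finType) (e : rel V).

Lemma VP_le1 (a : V -> R) i : VP e a -> a i <= 1.
Proof.
case=> lam [lam_ge0 _ lam_sum ->]; rewrite -lam_sum; apply: ler_sum => S _.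
by rewrite /charvec; case: ifP; rewrite ?mulr1 ?mulr0.
Qed.

Lemma VP_sum_clique_le1 (a : V -> R) (C : {set V}) : VP e a -> is_clique e C ->
  \sum_(i in C) a i <= 1.
Proof.
case=> lam [lam_ge0 lam_indep lam_sum aE] cliqueC; under eq_bigr do rewrite aE.
rewrite exchange_big /= -lam_sum; apply: ler_sum => S _; rewrite -big_distrr /=.
have [indepS|] := boolP (is_independent e S); last by move/lam_indep->; rewrite mul0r.
rewrite -[leRHS]mulr1; apply: ler_wpM2l => //.
have -> : \sum_(i in C) charvec R S i = #|S :&: C|%:R.
  rewrite /charvec -big_mkcondr /= sumr_const; congr (_ *+ _).
  by apply: eq_card => i; rewrite !inE andbC.
rewrite lern1 leqNgt; apply/negP => /card_gt1P[x [y [xSC ySC nxy]]].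
move: xSC ySC; rewrite !inE => /andP[xS xC] /andP[yS yC].
have exy : e x y by apply: is_clique_adj cliqueC xC yC nxy.
by move: indepS => /forall_inP/(_ x xS)/forall_inP/(_ y yS); rewrite exy.
Qed.

Lemma VP_const_inv_colours (w : nat) (col : V -> 'I_w) :
  (0 < w)%N -> (forall u v, e u v -> col u != col v) -> VP e (fun _ => (w%:R : R)^-1).
Proof.
move=> w_gt0 col_proper; have w_neq0 : (w%:R : R) != 0 by rewrite pnatr_eq0 -lt0n.
pose class (j : 'I_w) : {set V} := [set v | col v == j].
have class_indep j : is_independent e (class j).
  apply/forall_inP => x; rewrite inE => /eqP cx; apply/forall_inP => y; rewrite inE => /eqP cy.
  by apply/negP => /col_proper; rewrite cx cy eqxx.
exists (fun S => \sum_(j < w) (S == class j)%:R / w%:R); split.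
- by move=> S; apply: sumr_ge0 => j _; apply: divr_ge0.
- move=> S notS; apply: big1 => j _.
  by case: eqP => [Sj|_]; [move: notS; rewrite Sj class_indep | rewrite mul0r].
- rewrite exchange_big /= (eq_bigr (fun _ => (w%:R)^-1)); last first.
    move=> j _; rewrite -big_distrl /= (bigD1 (class j)) //= eqxx big1 ?addr0 ?mul1r //.
    by move=> S /negbTE ->.
  by rewrite sumr_const card_ord -[_ *+ _]mulr_natl mulfV.
- move=> i; under eq_bigr do rewrite big_distrl /=.
  rewrite exchange_big /= (bigD1 (col i)) //= [X in _ + X]big1 ?addr0.
    rewrite (bigD1 (class (col i))) //= [X in _ + X]big1 ?addr0.
      by rewrite eqxx /charvec inE eqxx !mul1r mulr1.
    by move=> S /negbTE ->; rewrite !mul0r.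
  move=> j ij; apply: big1 => S _; case: eqP => [->|]; last by rewrite !mul0r.
  by rewrite /charvec inE eq_sym (negbTE ij) mulr0.
Qed.

Definition entropy_values (P : V -> R) : set R :=
  [set h | exists a, VP e a /\ (forall i, 0 < P i -> 0 < a i) /\
    h = \sum_(i | 0 < P i) P i * ln (a i)^-1].

Lemma entropy_values_ge0 P : has_lbound (entropy_values P).
Proof.
exists 0 => h [a [VPa [a_gt0 ->]]]; apply: sumr_ge0 => i Pi_gt0.
apply: mulr_ge0; first exact: ltW.
by apply: ln_ge0; rewrite invf_ge1 ?a_gt0 //; apply: VP_le1 VPa.
Qed.

Lemma entropy_values_const P (r : R) : 0 < r -> VP e (fun _ => r) ->
  entropy_values P (\sum_(i | 0 < P i) P i * ln r^-1).
Proof. by move=> r_gt0 VPr; exists (fun _ => r). Qed.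

Lemma graph_entropy_le_ln_colours (w : nat) (col : V -> 'I_w) (P : V -> R) :
  (0 < w)%N -> (forall u v, e u v -> col u != col v) -> is_distribution P ->
  graph_entropy e P <= ln w%:R.
Proof.
move=> w_gt0 col_proper [P_ge0 P_sum].
have inv_gt0 : 0 < (w%:R : R)^-1 by rewrite invr_gt0 ltr0n.
have := entropy_values_const P inv_gt0 (VP_const_inv_colours w_gt0 col_proper).
move/(ge_inf (entropy_values_ge0 P))/le_trans; apply.
rewrite invrK -big_distrl /= -[leRHS]mul1r ler_wpM2r ?ln_ge0 ?ler1n //.
rewrite -P_sum [leRHS](bigID (fun i => 0 < P i)) /= lerDl.
by apply: sumr_ge0 => i _; apply: P_ge0.
Qed.

(* Summing ln x <= x - 1 over the blocks of the clique partition. *)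
Lemma sum_ln_scaled_VP_le0 (w : nat) (Q : {set {set V}}) (a : V -> R) :
  (0 < w)%N -> finset.partition Q [set: V] ->
  (forall C, C \in Q -> is_clique e C /\ #|C| = w) ->
  VP e a -> (forall i, 0 < a i) -> \sum_i ln (w%:R * a i) <= 0.
Proof.
move=> w_gt0 QP QC VPa a_gt0; have wR_gt0 : 0 < (w%:R : R) by rewrite ltr0n.
apply: le_trans (_ : \sum_i (w%:R * a i - 1) <= 0).
  apply: ler_sum => i _; have := @le_ln1Dx R (w%:R * a i - 1).
  by rewrite subrKC; apply; rewrite ltrBrDl subrr mulr_gt0.
case/and3P: QP => /eqP cover triv _.
have -> : \sum_i (w%:R * a i - 1) = \sum_(i in finset.cover Q) (w%:R * a i - 1).
  by apply: eq_bigl => i; rewrite cover inE.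
rewrite finset.big_trivIset //; apply: sumr_le0 => C CQ; have [cliqueC cardC] := QC C CQ.
rewrite sumrB sumr_const -big_distrr /= cardC subr_le0 -[leRHS]mulr1 -mulr_natr mul1r.
by apply: ler_wpM2l; [exact: ltW | exact: VP_sum_clique_le1].
Qed.

Lemma ln_le_uniform_entropy (w : nat) (Q : {set {set V}}) :
  irreflexive e -> (0 < #|V|)%N -> (0 < w)%N -> finset.partition Q [set: V] ->
  (forall C, C \in Q -> is_clique e C /\ #|C| = w) ->
  ln w%:R <= graph_entropy e (@uniform_distribution R V).
Proof.
move=> e_irr V_gt0 w_gt0 QP QC.
have U_gt0 : 0 < (#|V|%:R : R)^-1 by rewrite invr_gt0 ltr0n.
have rank_proper u v : e u v -> enum_rank u != enum_rank v.
  by move=> euv; rewrite (inj_eq enum_rank_inj); apply: contraTneq euv => ->; rewrite e_irr.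
apply: lb_le_inf.
  by eexists; apply: entropy_values_const U_gt0 (VP_const_inv_colours V_gt0 rank_proper).
move=> h [a [VPa [a_gt0 ->]]]; rewrite /uniform_distribution.
have a_pos i : 0 < a i by apply: a_gt0.
rewrite (eq_bigl predT) // -big_distrr /= ler_pdivlMl ?ltr0n //.
rewrite mulr_natl -sumr_const -subr_ge0 -sumrB -oppr_le0 -sumrN /=.
apply: le_trans (sum_ln_scaled_VP_le0 w_gt0 QP QC VPa a_pos).
apply: ler_sum => i _.
by rewrite lnM ?posrE ?a_pos ?ltr0n // lnV ?posrE ?a_pos // opprB opprK.
Qed.

Theorem entropy_symmetric_of_colouring (w : nat) (col : V -> 'I_w) (Q : {set {set V}}) :
  irreflexive e -> (forall u v, e u v -> col u != col v) ->
  finset.partition Q [set: V] -> (forall C, C \in Q -> is_clique e C /\ #|C| = w) ->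
  entropy_symmetric R e.
Proof.
move=> e_irr col_proper QP QC P [P_ge0 P_sum].
have [v _|V0] := pickP (@predT V); last first.
  by move: P_sum; rewrite big_pred0 // => /eqP; rewrite eq_sym oner_eq0.
have V_gt0 : (0 < #|V|)%N by apply/card_gt0P; exists v.
have w_gt0 : (0 < w)%N by apply: leq_ltn_trans (ltn_ord (col v)).
apply: le_trans (graph_entropy_le_ln_colours w_gt0 col_proper (conj P_ge0 P_sum)) _.
exact: ln_le_uniform_entropy e_irr V_gt0 w_gt0 QP QC.
Qed.

End GraphEntropy.

Theorem mainTheorem4 (R : realType) (V : finType) (e : rel V) (k : nat) :
  simple_graph e ->
  is_line_graph e ->
  connected_graph e ->
  no_isolated e ->
  regular_of e k ->
  (3 < k)%N ->
  max_clique_partitionable e ->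
  entropy_symmetric R e.
Proof.
move=> simple line _ _ regular k_gt3 partition.
have [col col_proper] := line_graph_colouring simple line regular k_gt3 partition.
have [Q [QP QC]] := partition.
exact: entropy_symmetric_of_colouring simple.2 col_proper QP QC.
Qed.
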